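(* Let $G=(V,E)$ be a finite, simple, connected graph which is Lichnerowicz sharp and distance regular. Then $G$ is effective Bonnet Myers sharp, i.e. with $K:=\min_{x\sim y}\kappa(x,y)$ one has $\operatorname{diam}_{\operatorname{eff}}(G)=\frac{\max_v\operatorname{Deg}(v)}{K}$.
   Context: $d$ is the combinatorial distance, $\operatorname{Deg}$ the degree, $\operatorname{diam}_{\operatorname{eff}}(G)=\frac{1}{|V|^2}\sum_{x,y}d(x,y)$. Laplacian $\Delta f(x)=\sum_{y\sim x}(f(y)-f(x))$. Ollivier curvature: $\kappa(x,y)=\inf\{\Delta f(x)-\Delta f(y): f(y)-f(x)=1,\ \max_{u\sim v}|f(u)-f(v)|=1\}$. Lichnerowicz sharp: the smallest positive eigenvalue $\lambda$ of $-\Delta$ equals $\min_{x\sim y}\kappa(x,y)$. Distance regular: there are numbers $b_n,c_n$ such that for every $x$ and every $z$ with $d(x,z)=n$, $z$ has $b_n$ neighbors at distance $n+1$ and $c_n$ neighbors at distance $n-1$ from $x$. *)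

From HB Require Import structures.
From mathcomp Require Import all_boot all_order all_algebra.
From mathcomp Require Import classical_sets reals.
Set Implicit Arguments. Unset Strict Implicit. Unset Printing Implicit Defensive.
Import Order.TTheory GRing.Theory Num.Theory.
Local Open Scope ring_scope.

Section Graph.
Variables (T : finType) (e : rel T).

Fixpoint nball (n : nat) (x : T) : {set T} :=
  match n with
  | 0 => [set x]
  | n'.+1 => nball n' x :|: [set v | [exists u in nball n' x, e u v]]
  end.

(* combinatorial distance: least n with y in the n-ball of x
   (meaningful for connected graphs, where it is < #|T|) *)
Definition dist (x y : T) : nat :=
  find (fun n => y \in nball n x) (iota 0 #|T|).

Definition Deg (x : T) : nat := #|[set y | e x y]|.

Definition maxDeg : nat := \max_(v : T) Deg v.

Definition distance_regular : Prop :=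
  exists b c : nat -> nat, forall (x z : T) (n : nat), dist x z = n ->
    #|[set w | e z w & dist x w == n.+1]| = b n /\
    #|[set w | e z w & (dist x w).+1 == n]| = c n.

Variable R : realType.

Definition diam_eff : R :=
  (#|T|%:R ^+ 2)^-1 * \sum_(x : T) \sum_(y : T) (dist x y)%:R.

Definition Laplacian (f : T -> R) (x : T) : R :=
  \sum_(y : T | e x y) (f y - f x).

(* Ollivier curvature (Muench–Wojciechowski formula) *)
Definition kappa (x y : T) : R :=
  inf [set k : R | exists f : T -> R,
         [/\ f y - f x = 1,
             \big[Num.max/0]_(p : T * T | e p.1 p.2) `|f p.1 - f p.2| = 1
           & k = Laplacian f x - Laplacian f y]].

Definition Kmin : R :=
  inf [set k : R | exists x y : T, e x y /\ k = kappa x y].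

Definition eigenvalue_negLap (lam : R) : Prop :=
  exists f : T -> R, (exists x, f x != 0) /\
    forall x, - Laplacian f x = lam * f x.

Definition smallest_pos_eigenvalue (lam : R) : Prop :=
  [/\ 0 < lam, eigenvalue_negLap lam &
      forall mu, 0 < mu -> eigenvalue_negLap mu -> lam <= mu].

Definition Lichnerowicz_sharp : Prop :=
  exists lam, smallest_pos_eigenvalue lam /\ lam = Kmin.

End Graph.

From HB Require Import structures.
From mathcomp Require Import all_boot all_order all_algebra.
From mathcomp Require Import classical_sets reals.
From mathcomp Require Import zify.
From mathcomp.algebra_tactics Require Import ring lra.
Set Implicit Arguments. Unset Strict Implicit. Unset Printing Implicit Defensive.
Import Order.TTheory GRing.Theory Num.Theory.

(* Let phi be an eigenfunction of -Delta for K = min kappa, with phi x0 <> 0.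
   By distance regularity, the averages g n of phi over the spheres of radius n
   around x0 satisfy  b_n (g_(n+1) - g_n) + c_n (g_(n-1) - g_n) = - K g_n.
   Testing the curvature on the 1-Lipschitz function d(x, .), whose Laplacian
   on the n-th sphere is b_n - c_n, gives
   (b_m - c_m) - (b_(m+1) - c_(m+1)) >= K.  Against the recurrence this forces
   all steps of g to be equal, hence b_n - c_n = b_0 - K n, i.e.
   Delta d(x, .) = Deg - K d(x, .).  Summing over the graph, where the
   Laplacian sums to 0, gives sum_y d(x, y) = |V| Deg / K for every x. *)

Section Distance.
Variables (T : finType) (e : rel T).

Lemma in_nballS n x v :
  (v \in nball e n.+1 x) = (v \in nball e n x) || [exists u in nball e n x, e u v].
Proof. by rewrite /= !inE. Qed.

Lemma nball_le n m x : n <= m -> {subset nball e n x <= nball e m x}.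
Proof.
elim: m => [|m IHm]; first by rewrite leqn0 => /eqP ->.
rewrite leq_eqVlt => /orP [/eqP -> //|/IHm sub_nm] v /sub_nm.
by rewrite in_nballS => ->.
Qed.

Lemma last_path_in_nball x p : path e x p -> last x p \in nball e (size p) x.
Proof.
elim/last_ind: p => [|p z IHp]; first by rewrite /= inE.
rewrite rcons_path last_rcons size_rcons => /andP [/IHp p_in ez].
by rewrite in_nballS; apply/orP; right; apply/existsP; exists (last x p); rewrite p_in.
Qed.

Hypothesis e_conn : forall x y : T, connect e x y.

Lemma in_small_nball x y : exists2 n, n < #|T| & y \in nball e n x.
Proof.
have /connectP [p ep ->] := e_conn x y.
have [p' ep' uniq_p' _] := shortenP ep.
exists (size p'); last exact: last_path_in_nball.
by have := max_card (mem (x :: p')); rewrite (card_uniqP uniq_p').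
Qed.

Lemma in_nball_dist x y n : (y \in nball e n x) = (dist e x y <= n).
Proof.
have [m m_lt y_in] := in_small_nball x y.
have has_ball : has (fun n => y \in nball e n x) (iota 0 #|T|).
  by apply/hasP; exists m; rewrite ?mem_iota.
have dist_lt : dist e x y < #|T| by move: has_ball; rewrite has_find size_iota.
apply/idP/idP => [y_in_n|le_dn].
  rewrite leqNgt; apply: contraL y_in_n => lt_nd.
  by have := before_find 0 lt_nd; rewrite nth_iota ?(ltn_trans lt_nd) // => ->.
by apply: (nball_le le_dn); have := nth_find 0 has_ball; rewrite nth_iota.
Qed.

Lemma dist_eq0 x y : (dist e x y == 0) = (y == x).
Proof. by rewrite -leqn0 -in_nball_dist /= inE. Qed.

Lemma distxx x : dist e x x = 0.
Proof. by apply/eqP; rewrite dist_eq0. Qed.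

Lemma dist_edge x u v : e u v -> dist e x v <= (dist e x u).+1.
Proof.
move=> euv; rewrite -in_nball_dist in_nballS; apply/orP; right.
by apply/existsP; exists u; rewrite euv in_nball_dist leqnn.
Qed.

Lemma dist_pred x v n : dist e x v = n.+1 -> exists2 u, e u v & dist e x u = n.
Proof.
move=> dv; have : v \in nball e n.+1 x by rewrite in_nball_dist dv.
rewrite in_nballS in_nball_dist dv ltnn /= => /exists_inP [u u_in euv].
exists u => //; move: u_in; rewrite in_nball_dist.
by have := dist_edge x euv; rewrite dv; lia.
Qed.

Lemma dist_levels x y k : k <= dist e x y -> exists v, dist e x v = k.
Proof.
elim: {y}(dist e x y) {1 3}y (erefl (dist e x y)) => [|n IHn] y dy le_k.
  by exists y; rewrite dy; lia.
move: le_k; rewrite dy leq_eqVlt ltnS => /orP [/eqP ->|le_kn]; first by exists y.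
by have [u _ du] := dist_pred dy; apply: (IHn u du); rewrite du.
Qed.

End Distance.

Local Open Scope ring_scope.

Section Laplacian.
Variables (T : finType) (e : rel T) (R : realType).

Definition lipschitz_const (f : T -> R) : R :=
  \big[Num.max/0]_(p : T * T | e p.1 p.2) `|f p.1 - f p.2|.

Lemma le_lipschitz_const f u v : e u v -> `|f u - f v| <= lipschitz_const f.
Proof. exact: (@le_bigmax_cond _ _ _ 0 (u, v) (fun p => e p.1 p.2)). Qed.

Lemma lipschitz_const_eq1 f :
  (forall u v, e u v -> `|f u - f v| <= 1) ->
  (exists u v, e u v /\ `|f u - f v| = 1) -> lipschitz_const f = 1.
Proof.
move=> f_lip [u [v [euv fuv]]]; apply/eqP; rewrite eq_le; apply/andP; split.
  by apply: bigmax_le => // p; apply: f_lip.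
by rewrite -fuv le_lipschitz_const.
Qed.

Lemma norm_Laplacian_le f x :
  lipschitz_const f = 1 -> `|Laplacian e f x| <= (Deg e x)%:R.
Proof.
move=> f_lip; rewrite /Deg cardsE -sum1_card natr_sum.
apply: le_trans (ler_norm_sum _ _ _) _; apply: ler_sum => y exy.
by rewrite distrC -f_lip le_lipschitz_const.
Qed.

Lemma kappa_le f x y : f y - f x = 1 -> lipschitz_const f = 1 ->
  kappa e R x y <= Laplacian e f x - Laplacian e f y.
Proof.
move=> fxy f_lip; apply: ge_inf; last by exists f.
exists (- ((Deg e x)%:R + (Deg e y)%:R)) => _ [g [_ g_lip ->]].
have := norm_Laplacian_le x g_lip; have := norm_Laplacian_le y g_lip.
rewrite !ler_norml; lra.
Qed.

Lemma Kmin_le_kappa x y : e x y -> Kmin e R <= kappa e R x y.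
Proof.
move=> exy; apply: ge_inf; last by exists x, y.
exists (- \sum_(p : T * T) `|kappa e R p.1 p.2|) => _ [u [v [_ ->]]].
rewrite lerNl (le_trans (ler_norm _)) // normrN (bigD1 (u, v)) //= lerDl.
exact: sumr_ge0.
Qed.

Hypothesis e_sym : symmetric e.

Lemma sum_Laplacian (f : T -> R) : \sum_x Laplacian e f x = 0.
Proof.
rewrite /Laplacian; under eq_bigr do rewrite sumrB.
apply/eqP; rewrite sumrB subr_eq0; apply/eqP.
rewrite (exchange_big_dep xpredT) //=; apply: eq_bigr => y _.
by apply: eq_bigl => x; rewrite e_sym.
Qed.

Lemma sum_of_Laplacian_affine (f : T -> R) (a K : R) : K != 0 ->
  (forall x, Laplacian e f x = a - K * f x) -> \sum_x f x = #|T|%:R * a / K.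
Proof.
move=> K_neq0 Lf; have := sum_Laplacian f.
under eq_bigr do rewrite Lf.
rewrite sumrB sumr_const -mulr_sumr => /eqP; rewrite subr_eq0 => /eqP sumE.
by rewrite -[LHS](mulKf K_neq0) -sumE mulr_natl mulrC.
Qed.

End Laplacian.

Section EigenRecurrence.
Variables (R : realType) (b c : nat -> nat) (K : R) (N : nat).
Hypothesis K_gt0 : 0 < K.
Hypothesis c0 : c 0 = 0%N.
Hypothesis bN : b N = 0%N.
Hypothesis c_gt0 : forall m, (0 < m <= N)%N -> (0 < c m)%N.
Hypothesis b_gt0 : forall m, (m < N)%N -> (0 < b m)%N.
Hypothesis drift_drop : forall m, (m < N)%N ->
  K <= ((b m)%:R - (c m)%:R) - ((b m.+1)%:R - (c m.+1)%:R).

Definition eigen_recurrence (g : nat -> R) := forall n, (n <= N)%N ->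
  (b n)%:R * (g n.+1 - g n) + (c n)%:R * (g n.-1 - g n) = - K * g n.

Lemma eigen_recurrenceZ g s :
  eigen_recurrence g -> eigen_recurrence (fun n => g n * s).
Proof.
by move=> rec n le_n; rewrite -!mulrBl !mulrA -mulrDl rec // mulrA.
Qed.

Lemma eigen_recurrence_start g :
  eigen_recurrence g -> (b 0)%:R * (g 1 - g 0) = - K * g 0.
Proof. by move=> /(_ 0%N isT); rewrite c0 mul0r addr0. Qed.

Definition steps_le1 (f : nat -> R) := forall n, (n < N)%N -> `|f n.+1 - f n| <= 1.

Lemma unit_step_spreads f j : eigen_recurrence f -> steps_le1 f ->
  (j < N)%N -> f j.+1 - f j = 1 ->
  ((0 < j)%N -> f j - f j.-1 = 1) /\ ((j.+1 < N)%N -> f j.+2 - f j.+1 = 1).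
Proof.
move=> rec f_steps lt_jN fj.
have rec0 := rec j (ltnW lt_jN); have rec1 := rec j.+1 lt_jN.
rewrite fj mulr1 in rec0; rewrite [f j - _](_ : _ = -1) ?mulrN1 in rec1; last lra.
(* subtracting the recurrences at j and j+1 and comparing with [drift_drop j]
   leaves a sum of two nonnegative terms that is nonpositive *)
have down_ge0 : 0 <= (c j)%:R * (f j.-1 - f j + 1).
  case: j lt_jN fj {rec0 rec1} => [|j] lt_jN fj; first by rewrite subrr add0r mulr1.
  apply: mulr_ge0 => //; have := f_steps j (ltnW lt_jN); rewrite ler_norml /=; lra.
have up_ge0 : 0 <= (b j.+1)%:R * (1 - (f j.+2 - f j.+1)).
  have [lt_j1N|le_Nj1] := ltnP j.+1 N; last by rewrite (_ : j.+1 = N) ?bN ?mul0r //; lia.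
  apply: mulr_ge0 => //; have := f_steps j.+1 lt_j1N; rewrite ler_norml; lra.
have drop := drift_drop lt_jN.
have Kf : K * f j.+1 - K * f j = K by rewrite -mulrBr fj mulr1.
have down_eq0 : (c j)%:R * (f j.-1 - f j + 1) = 0 by lra.
have up_eq0 : (b j.+1)%:R * (1 - (f j.+2 - f j.+1)) = 0 by lra.
split=> [j_gt0|lt_j1N].
  have cj_neq0 : (c j)%:R != 0 :> R by rewrite pnatr_eq0 -lt0n c_gt0 // j_gt0 ltnW.
  by move/eqP: down_eq0; rewrite mulf_eq0 (negbTE cj_neq0) => /eqP; lra.
have bj_neq0 : (b j.+1)%:R != 0 :> R by rewrite pnatr_eq0 -lt0n b_gt0.
by move/eqP: up_eq0; rewrite mulf_eq0 (negbTE bj_neq0) => /eqP; lra.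
Qed.

Lemma unit_steps f m : eigen_recurrence f -> steps_le1 f ->
  (m < N)%N -> f m.+1 - f m = 1 -> forall j, (j < N)%N -> f j.+1 - f j = 1.
Proof.
move=> rec f_steps lt_mN fm.
suff steps_at : forall k j, (j < N)%N -> (j + k = m \/ j = m + k)%N -> f j.+1 - f j = 1.
  by move=> j lt_jN; apply: (steps_at ((m - j) + (j - m))%N) => //; lia.
elim=> [|k IHk] j lt_jN jk; first by rewrite (_ : j = m) //; lia.
case: jk => [jkm|jmk]; last rewrite {}jmk in lt_jN *.
  have lt_j1N : (j.+1 < N)%N by lia.
  have j1km : (j.+1 + k = m)%N by rewrite addSnnS.
  have step_j1 := IHk _ lt_j1N (or_introl j1km).
  by have [step_down _] := unit_step_spreads rec f_steps lt_j1N step_j1; apply: step_down.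
have lt_mkN : (m + k < N)%N by lia.
have step_mk := IHk _ lt_mkN (or_intror erefl).
have [_ step_up] := unit_step_spreads rec f_steps lt_mkN step_mk.
by rewrite addnS; apply: step_up; rewrite -addnS.
Qed.

Lemma unit_steps_drift f : eigen_recurrence f ->
  (forall j, (j < N)%N -> f j.+1 - f j = 1) ->
  forall n, (n <= N)%N -> (b n)%:R - (c n)%:R = (b 0)%:R - K * n%:R.
Proof.
move=> rec steps n le_nN.
have f_lin : f n = f 0 + n%:R.
  elim: n le_nN => [|n IHn] lt_nN; first by rewrite addr0.
  by have := steps n lt_nN; rewrite (IHn (ltnW lt_nN)) -natr1; lra.
have up k : (k <= N)%N -> (b k)%:R * (f k.+1 - f k) = (b k)%:R.
  rewrite leq_eqVlt => /orP [/eqP ->|/steps ->]; last exact: mulr1.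
  by rewrite bN mul0r.
have down : (c n)%:R * (f n.-1 - f n) = - (c n)%:R.
  case: n {f_lin} le_nN => [|n] le_nN; first by rewrite c0 mul0r oppr0.
  by rewrite /= -opprB steps // mulrN1.
have start := eigen_recurrence_start rec; rewrite up // in start.
by have := rec n le_nN; rewrite up // down f_lin start mulrDr; lra.
Qed.

Lemma exists_unit_step_solution g : eigen_recurrence g -> g 0 != 0 ->
  exists f, eigen_recurrence f /\ forall j, (j < N)%N -> f j.+1 - f j = 1.
Proof.
move=> rec g0_neq0.
have : (b 0)%:R * (g 1 - g 0) != 0.
  by rewrite (eigen_recurrence_start rec) mulf_neq0 // oppr_eq0 gt_eqF.
rewrite mulf_eq0 negb_or => /andP [b0_neq0 step0_neq0].
have N_gt0 : (0 < N)%N by rewrite lt0n; apply: contraNneq b0_neq0 => N0; rewrite -N0 bN.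
pose step n := g n.+1 - g n.
have [m _ m_max] := arg_maxP (fun i : 'I_N => `|step i|) (isT : xpredT (Ordinal N_gt0)).
have s_neq0 : step m != 0.
  rewrite -normr_gt0; apply: lt_le_trans (m_max (Ordinal N_gt0) isT).
  by rewrite normr_gt0.
exists (fun n => g n / step m); split; first exact: eigen_recurrenceZ.
apply: (@unit_steps _ m) => //; first exact: eigen_recurrenceZ.
  move=> n lt_nN; rewrite -mulrBl normrM normfV ler_pdivrMr ?normr_gt0 // mul1r.
  exact: (m_max (Ordinal lt_nN)).
by rewrite -mulrBl divff.
Qed.

Lemma eigen_recurrence_drift g : eigen_recurrence g -> g 0 != 0 ->
  forall n, (n <= N)%N -> (b n)%:R - (c n)%:R = (b 0)%:R - K * n%:R.
Proof.
move=> rec g0_neq0; have [f [f_rec f_steps]] := exists_unit_step_solution rec g0_neq0.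
exact: unit_steps_drift f_rec f_steps.
Qed.

End EigenRecurrence.

Section DistanceRegular.
Variables (T : finType) (e : rel T) (R : realType).
Hypotheses (e_sym : symmetric e) (e_irr : irreflexive e).
Hypothesis e_conn : forall x y : T, connect e x y.
Variables b c : nat -> nat.
Hypothesis bc_spec : forall (x z : T) (n : nat), dist e x z = n ->
  #|[set w | e z w & dist e x w == n.+1]| = b n /\
  #|[set w | e z w & (dist e x w).+1 == n]| = c n.

Local Notation d := (dist e).

Lemma card_up x y : #|[pred v | e y v && (d x v == (d x y).+1)]| = b (d x y).
Proof. by have [<- _] := bc_spec (erefl (d x y)); apply: eq_card => v; rewrite !inE. Qed.

Lemma card_down x y : #|[pred v | e y v && ((d x v).+1 == d x y)]| = c (d x y).
Proof. by have [_ <-] := bc_spec (erefl (d x y)); apply: eq_card => v; rewrite !inE. Qed.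

Lemma Deg_eq_b0 v : (Deg e v = b 0)%N.
Proof.
have := card_up v v; rewrite (distxx e_conn) => <-.
apply: eq_card => w; rewrite !inE; case evw: (e v w) => //=; apply/esym/eqP.
have dw_neq0 : d v w != 0.
  by rewrite (dist_eq0 e_conn); apply: contraTneq evw => ->; rewrite e_irr.
by have := dist_edge e_conn v evw; rewrite (distxx e_conn); lia.
Qed.

Lemma maxDeg_eq_b0 (x : T) : (maxDeg e = b 0)%N.
Proof.
apply/eqP; rewrite eqn_leq; apply/andP; split.
  by apply/bigmax_leqP => v _; rewrite Deg_eq_b0.
by rewrite -(Deg_eq_b0 x); apply: (@leq_bigmax T (Deg e) x).
Qed.

Lemma c0_eq0 (x : T) : (c 0 = 0)%N.
Proof.
have := card_down x x; rewrite (distxx e_conn) => <-.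
by apply: eq_card0 => v; rewrite !inE andbF.
Qed.

Lemma dist_edge_cases x y v : e y v ->
  [\/ d x v = (d x y).+1, (d x v).+1 = d x y | d x v = d x y].
Proof.
move=> eyv; have le_vy := dist_edge e_conn x eyv.
have le_yv := dist_edge e_conn x (etrans (e_sym v y) eyv).
case: (ltngtP (d x v) (d x y)) => [lt|lt|->]; last exact: Or33.
  by apply: Or32; lia.
by apply: Or31; lia.
Qed.

Lemma sum_by_level x y (H : T -> R) :
  \sum_(v | e y v) H v =
  \sum_(v | e y v && (d x v == (d x y).+1)) H v +
  \sum_(v | e y v && ((d x v).+1 == d x y)) H v +
  \sum_(v | e y v && (d x v == d x y)) H v.
Proof.
rewrite (bigID (fun v => d x v == (d x y).+1)) /= -addrA; congr (_ + _).
rewrite (bigID (fun v => (d x v).+1 == d x y)) /=; congr (_ + _).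
  by apply: eq_bigl => v; case: (e y v); case: eqP; case: eqP => //=; lia.
apply: eq_bigl => v; case eyv: (e y v) => //=.
by case: (dist_edge_cases x eyv); repeat (case: eqP => /=); lia.
Qed.

Lemma Laplacian_radial x y n (G : nat -> R) : d x y = n ->
  Laplacian e (fun v => G (d x v)) y =
  (b n)%:R * (G n.+1 - G n) + (c n)%:R * (G n.-1 - G n).
Proof.
move=> dy; rewrite /Laplacian (sum_by_level x y) dy.
rewrite [X in _ + X]big1 ?addr0 => [|v /andP [_ /eqP ->]]; last by rewrite subrr.
congr (_ + _).
  rewrite (eq_bigr (fun=> G n.+1 - G n)) => [|v /andP [_ /eqP ->] //].
  by rewrite sumr_const -dy card_up dy mulr_natl.
rewrite (eq_bigr (fun=> G n.-1 - G n)) => [|v /andP [_ /eqP <-] //].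
by rewrite sumr_const -dy card_down dy mulr_natl.
Qed.

Lemma Laplacian_dist x y :
  Laplacian e (fun v => (d x v)%:R : R) y = (b (d x y))%:R - (c (d x y))%:R.
Proof.
rewrite (Laplacian_radial (fun n => n%:R) (erefl (d x y))).
by case: (d x y) => [|n] /=; rewrite ?(c0_eq0 x) -?natr1; lra.
Qed.

Definition ecc x := (\max_(y : T) d x y)%N.

Lemma dist_le_ecc x y : (d x y <= ecc x)%N.
Proof. exact: (@leq_bigmax T (fun y => d x y) y). Qed.

Lemma ecc_attained x : exists y, d x y = ecc x.
Proof. by exists [arg max_(y > x) d x y]; rewrite /ecc (bigop.bigmax_eq_arg x). Qed.

Lemma exists_dist_eq x k : (k <= ecc x)%N -> exists v, d x v = k.
Proof. by have [y <-] := ecc_attained x; apply: dist_levels. Qed.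

Lemma b_gt0 x m : (m < ecc x -> 0 < b m)%N.
Proof.
move=> lt_m; have [w dw] := exists_dist_eq lt_m.
have [u euw du] := dist_pred e_conn dw.
by rewrite -du -card_up; apply/card_gt0P; exists w; rewrite !inE euw du dw eqxx.
Qed.

Lemma c_gt0 x m : (0 < m <= ecc x -> 0 < c m)%N.
Proof.
case: m => [//|m] /= le_m; have [v dv] := exists_dist_eq le_m.
have [u euv du] := dist_pred e_conn dv.
by rewrite -dv -card_down; apply/card_gt0P; exists u; rewrite !inE e_sym euv du dv eqxx.
Qed.

Lemma dist_le_of_b_eq0 x y n : (b n = 0 -> d x y <= n)%N.
Proof.
move=> bn; rewrite leqNgt; apply/negP => lt_n.
by have := b_gt0 (leq_trans lt_n (dist_le_ecc x y)); rewrite bn.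
Qed.

Lemma b_ecc_eq0 x : (b (ecc x) = 0)%N.
Proof.
have [y dy] := ecc_attained x; rewrite -dy -card_up.
by apply: eq_card0 => v; rewrite !inE dy; have := dist_le_ecc x v; case: eqP; lia.
Qed.

Lemma Kmin_le_drift_drop x m : (m < ecc x)%N ->
  Kmin e R <= ((b m)%:R - (c m)%:R) - ((b m.+1)%:R - (c m.+1)%:R).
Proof.
move=> lt_m; have [w dw] := exists_dist_eq lt_m.
have [z ezw dz] := dist_pred e_conn dw.
pose F v : R := (d x v)%:R.
have F_step : F w - F z = 1 by rewrite /F dw dz -natr1; lra.
have F_lip : lipschitz_const e F = 1.
  apply: lipschitz_const_eq1 => [u v euv|].
    rewrite ler_norml /F.
    by case: (dist_edge_cases x euv) => [->|<-|->]; rewrite -?natr1; lra.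
  by exists w, z; rewrite F_step normr1 e_sym.
apply: le_trans (Kmin_le_kappa R ezw) _; rewrite -dw -dz -!Laplacian_dist.
exact: kappa_le.
Qed.

Definition sphere x (n : nat) : {set T} := [set y | d x y == n].

Lemma in_sphere x n y : (y \in sphere x n) = (d x y == n).
Proof. by rewrite inE. Qed.

Definition sphere_mean (F : T -> R) x n : R :=
  (\sum_(y in sphere x n) F y) / #|sphere x n|%:R.

Definition sphere_flux (F : T -> R) x n : R :=
  \sum_(y in sphere x n) \sum_(v | e y v && (d x v == n.+1)) (F v - F y).

Lemma sum_sphere_mean (F : T -> R) x n :
  \sum_(y in sphere x n) F y = #|sphere x n|%:R * sphere_mean F x n.
Proof.
rewrite /sphere_mean; have [S0|S_neq0] := eqVneq #|sphere x n| 0%N.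
  by move/eqP: S0; rewrite cards_eq0 => /eqP ->; rewrite big_set0 mul0r mulr0.
by rewrite mulrC divfK // pnatr_eq0.
Qed.

Lemma sphere0 x : sphere x 0 = [set x].
Proof. by apply/setP => y; rewrite in_sphere inE (dist_eq0 e_conn). Qed.

Lemma sphere_mean0 (F : T -> R) x : sphere_mean F x 0 = F x.
Proof. by rewrite /sphere_mean sphere0 big_set1 cards1 divr1. Qed.

Lemma sum_sphere_up_start (F : T -> R) x n :
  \sum_(y in sphere x n) \sum_(v | e y v && (d x v == n.+1)) F y =
  (b n)%:R * \sum_(y in sphere x n) F y.
Proof.
rewrite mulr_sumr; apply: eq_bigr => y; rewrite in_sphere => /eqP dy.
by rewrite sumr_const -dy card_up mulr_natl.
Qed.

Lemma sum_sphere_up_end (F : T -> R) x n :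
  \sum_(y in sphere x n) \sum_(v | e y v && (d x v == n.+1)) F v =
  (c n.+1)%:R * \sum_(v in sphere x n.+1) F v.
Proof.
rewrite (exchange_big_dep (fun v => d x v == n.+1)) /=; last by move=> y v _ /andP [].
rewrite mulr_sumr; apply: eq_big => [v|v dv]; first by rewrite in_sphere.
rewrite sumr_const mulr_natl; congr (_ *+ _); move/eqP: dv => dv.
rewrite -dv -card_down; apply: eq_card => y.
by rewrite unfold_in /= !inE dv eqxx andbT eqSS (e_sym v) andbC.
Qed.

Lemma card_sphere_bc x n :
  #|sphere x n|%:R * (b n)%:R = #|sphere x n.+1|%:R * (c n.+1)%:R :> R.
Proof.
have := sum_sphere_up_end (fun=> 1) x n.
by rewrite (sum_sphere_up_start (fun=> 1)) !sumr_const mulrC => ->; rewrite mulrC.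
Qed.

Lemma sphere_flux_mean (F : T -> R) x n :
  sphere_flux F x n =
  #|sphere x n|%:R * (b n)%:R * (sphere_mean F x n.+1 - sphere_mean F x n).
Proof.
rewrite /sphere_flux; under eq_bigr do rewrite sumrB.
rewrite sumrB sum_sphere_up_end sum_sphere_up_start !sum_sphere_mean.
by rewrite mulrBr {1}card_sphere_bc; ring.
Qed.

Lemma sum_sphere_level (F : T -> R) x n :
  \sum_(y in sphere x n) \sum_(v | e y v && (d x v == n)) (F v - F y) = 0.
Proof.
under eq_bigr do rewrite sumrB.
apply/eqP; rewrite sumrB subr_eq0; apply/eqP.
rewrite (exchange_big_dep (fun v => d x v == n)) /=; last by move=> y v _ /andP [].
apply: eq_big => [v|v dv]; first by rewrite in_sphere.
by apply: eq_bigl => y; rewrite in_sphere dv andbT e_sym andbC.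
Qed.

Lemma sum_sphere_down (F : T -> R) x n :
  \sum_(y in sphere x n.+1) \sum_(v | e y v && ((d x v).+1 == n.+1)) (F v - F y) =
  - sphere_flux F x n.
Proof.
rewrite (exchange_big_dep (fun v => d x v == n)) /=; last by move=> y v _ /andP [].
rewrite /sphere_flux -sumrN; apply: eq_big => [v|v dv]; first by rewrite in_sphere.
rewrite -sumrN; apply: eq_big => [y|y _]; last by rewrite opprB.
by rewrite in_sphere eqSS dv andbT e_sym andbC.
Qed.

Lemma sum_sphere_Laplacian (F : T -> R) x n :
  \sum_(y in sphere x n) Laplacian e F y =
  sphere_flux F x n - (if n is m.+1 then sphere_flux F x m else 0).
Proof.
rewrite /Laplacian (eq_bigr (fun y =>
   \sum_(v | e y v && (d x v == n.+1)) (F v - F y) +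
   \sum_(v | e y v && ((d x v).+1 == n)) (F v - F y) +
   \sum_(v | e y v && (d x v == n)) (F v - F y))); last first.
  by move=> y; rewrite in_sphere => /eqP dy; rewrite (sum_by_level x y) dy.
rewrite !big_split /= sum_sphere_level addr0; congr (_ + _).
case: n => [|n]; last by rewrite sum_sphere_down.
by rewrite oppr0 big1 // => y _; rewrite big_pred0 // => v; rewrite andbF.
Qed.

Lemma sphere_mean_recurrence (phi : T -> R) (K : R) x :
  (forall y, - Laplacian e phi y = K * phi y) ->
  eigen_recurrence b c K (ecc x) (sphere_mean phi x).
Proof.
move=> phi_eigen n le_n; set g := sphere_mean phi x.
have [v dv] := exists_dist_eq le_n.
have S_neq0 : #|sphere x n|%:R != 0 :> R.
  by rewrite pnatr_eq0 -lt0n; apply/card_gt0P; exists v; rewrite in_sphere dv.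
apply: (mulfI S_neq0); rewrite mulrDr mulrA -sphere_flux_mean.
have -> : #|sphere x n|%:R * ((c n)%:R * (g n.-1 - g n)) =
          - (if n is m.+1 then sphere_flux phi x m else 0).
  case: n {le_n dv S_neq0} => [|m]; first by rewrite (c0_eq0 x) mul0r mulr0 oppr0.
  by rewrite sphere_flux_mean card_sphere_bc -/g /=; ring.
rewrite -sum_sphere_Laplacian mulrCA -sum_sphere_mean mulr_sumr.
by apply: eq_bigr => y _; rewrite mulNr -phi_eigen opprK.
Qed.

End DistanceRegular.

Theorem theorem3p6 (R : realType) (T : finType) (e : rel T)
  (e_sym : symmetric e) (e_irr : irreflexive e)
  (e_conn : forall x y : T, connect e x y)
  (hL : Lichnerowicz_sharp e R)
  (hD : distance_regular e) :
  diam_eff e R = (maxDeg e)%:R / Kmin e R.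
Proof.
have [b [c bc_spec]] := hD.
have [lam [[lam_gt0 [phi [[x0 phi_x0] phi_eigen]] _] lamE]] := hL.
set K := Kmin e R in lamE *.
have K_gt0 : 0 < K by rewrite -lamE.
have phi_rec : eigen_recurrence b c K (ecc e x0) (sphere_mean e phi x0).
  by apply: (sphere_mean_recurrence e_sym e_conn bc_spec) => y; rewrite phi_eigen lamE.
have drift : forall n, (n <= ecc e x0)%N -> (b n)%:R - (c n)%:R = (b 0)%:R - K * n%:R.
  apply: (eigen_recurrence_drift K_gt0 (c0_eq0 e_conn bc_spec x0)
           (b_ecc_eq0 bc_spec x0) _ _ _ phi_rec).
  - by move=> m; exact: (c_gt0 e_sym e_conn bc_spec).
  - by move=> m; exact: (b_gt0 e_conn bc_spec).
  - by move=> m; exact: (Kmin_le_drift_drop R e_sym e_conn bc_spec).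
  - by rewrite sphere_mean0.
have sum_dist x : \sum_y (dist e x y)%:R = #|T|%:R * (b 0)%:R / K.
  apply: (sum_of_Laplacian_affine e_sym (lt0r_neq0 K_gt0)) => y.
  rewrite (Laplacian_dist R e_sym e_conn bc_spec) drift //.
  by rewrite (dist_le_of_b_eq0 e_conn bc_spec) // (b_ecc_eq0 bc_spec).
have T_gt0 : #|T|%:R != 0 :> R by rewrite pnatr_eq0 -lt0n; apply/card_gt0P; exists x0.
rewrite /diam_eff (maxDeg_eq_b0 e_irr e_conn bc_spec x0).
under eq_bigr do rewrite sum_dist.
by rewrite sumr_const -mulr_natl; field; rewrite T_gt0 gt_eqF.
Qed.
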